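(* Let $L$ be a right Bol loop, i.e. a loop satisfying $x((yz)y)=((xy)z)y$ for all $x,y,z\in L$. If $L$ admits an anti-automorphism, then $L$ is a Moufang loop.
   Context: A loop is a set with a binary operation and a neutral element $1$ such that for all $a,b$ the equations $ax=b$ and $ya=b$ have unique solutions. An anti-automorphism of $L$ is a bijection $\varphi:L\to L$ with $\varphi(xy)=\varphi(y)\varphi(x)$ for all $x,y$. A left Bol loop satisfies $(x(yx))z=x(y(xz))$; a Moufang loop is a loop that is both a right Bol loop and a left Bol loop. *)

Definition is_loop {L : Type} (mul : L -> L -> L) (e : L) : Prop :=
  (forall x, mul e x = x /\ mul x e = x) /\
  (forall a b, exists x, mul a x = b /\ forall x', mul a x' = b -> x' = x) /\
  (forall a b, exists y, mul y a = b /\ forall y', mul y' a = b -> y' = y).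

Definition right_bol {L : Type} (mul : L -> L -> L) : Prop :=
  forall x y z, mul x (mul (mul y z) y) = mul (mul (mul x y) z) y.

Definition left_bol {L : Type} (mul : L -> L -> L) : Prop :=
  forall x y z, mul (mul x (mul y x)) z = mul x (mul y (mul x z)).

Definition moufang {L : Type} (mul : L -> L -> L) (e : L) : Prop :=
  is_loop mul e /\ right_bol mul /\ left_bol mul.

Definition anti_automorphism {L : Type} (mul : L -> L -> L) (phi : L -> L) : Prop :=
  (forall x y, phi x = phi y -> x = y) /\
  (forall y, exists x, phi x = y) /\
  (forall x y, phi (mul x y) = mul (phi y) (phi x)).


(* Applying an anti-automorphism to the right Bol identity reverses every
   product and yields exactly the left Bol identity. *)

Lemma left_bol_of_right_bol_anti {L : Type} (mul : L -> L -> L) (phi : L -> L) :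
  (forall y, exists x, phi x = y) ->
  (forall x y, phi (mul x y) = mul (phi y) (phi x)) ->
  right_bol mul -> left_bol mul.
Proof.
  intros phi_surj phi_anti rbol a b c.
  destruct (phi_surj a) as [y <-], (phi_surj b) as [z <-], (phi_surj c) as [x <-].
  pose proof (f_equal phi (rbol x y z)) as H.
  rewrite !phi_anti in H.
  exact H.
Qed.

Theorem proposition2p1 (L : Type) (mul : L -> L -> L) (e : L) :
  is_loop mul e ->
  right_bol mul ->
  (exists phi : L -> L, anti_automorphism mul phi) ->
  moufang mul e.
Proof.
  intros loop rbol [phi [_ [phi_surj phi_anti]]].
  split; [exact loop | split; [exact rbol |]].
  exact (left_bol_of_right_bol_anti mul phi phi_surj phi_anti rbol).
Qed.
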